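(* Let $\mathcal P$ be a polycyclic presentation on $g_1,\ldots,g_n$ with $r_1<\infty$, assume the subpresentation $\mathcal P^{[2]}$ is consistent, and assume there is an endomorphism $\sigma$ of $H^{[2]}$ with $\sigma(g_j)=g^{a_{1,j}}$ for $2\le j\le n$. (a) If $c(g_jg_1^{r_1})=c(g_j\,g^{e_1})$ holds for all $j>1$, then $\sigma^{r_1}$ equals the inner automorphism $x\mapsto (g^{e_1})^{-1}x\,g^{e_1}$ of $H^{[2]}$, and $\sigma$ is an automorphism. (b) If moreover $c(g_1^{r_1+1})=c(g_1\,g^{e_1})$ holds, then $\sigma$ fixes (the element represented by) $g^{e_1}$.
   Context: A polycyclic presentation $\mathcal P$ on generators $g_1,\ldots,g_n$ consists of $r_1,\ldots,r_n\in\mathbb N\cup\{\infty\}$ and integers $e_{i,k},a_{i,j,k},b_{i,j,k}$ ($1\le i<j\le n$, $1\le k\le n$) with $0\le e_{i,k},a_{i,j,k},b_{i,j,k}<r_k$ whenever $r_k<\infty$, and has defining relations $g_i^{r_i}=g^{e_i}$ (for $r_i<\infty$), $g_jg_i=g_ig^{a_{i,j}}$ (for $i<j$), $g_jg_i^{-1}=g_i^{-1}g^{b_{i,j}}$ (for $i<j$, $r_i=\infty$), where $g^{e_i}=g_{i+1}^{e_{i,i+1}}\cdots g_n^{e_{i,n}}$, $g^{a_{i,j}}=g_{i+1}^{a_{i,j,i+1}}\cdots g_n^{a_{i,j,n}}$, $g^{b_{i,j}}=g_{i+1}^{b_{i,j,i+1}}\cdots g_n^{b_{i,j,n}}$ (with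 $g_k^x$ for $x<0$ meaning $(g_k^{-1})^{|x|}$). From the presentation one computes integers $c_{i,j,k},d_{i,j,k},f_{i,k}$ (in $[0,r_k)$ when $r_k<\infty$) such that in the presented group $g_j^{-1}g_i=g_ig^{c_{i,j}}$ ($i<j$, $r_j=\infty$), $g_j^{-1}g_i^{-1}=g_i^{-1}g^{d_{i,j}}$ ($i<j$, $r_i=r_j=\infty$), $g_i^{-1}=g_i^{r_i-1}g^{f_i}$ ($r_i<\infty$). Let $M$ be the free monoid on $\{g_1^{\pm1},\ldots,g_n^{\pm1}\}$. A collection step replaces a subword equal to the left-hand side of one of these six kinds of relations by its right-hand side, or deletes $g_ig_i^{-1}$ or $g_i^{-1}g_i$; a word admitting no step is reduced (of the form $g_1^{x_1}\cdots g_n^{x_n}$ with $0\le x_i<r_i$ if $r_i<\infty$). The collection-to-the-left algorithm applies steps, always choosing the leftmost occurrence of a non-reduced subword involving a generator of smallest index (lower index has priority), until the word is reduced; $c\colon M\to M$ maps a word to the result. $\mathcal P^{[2]}$ is the presentation on $g_2,\ldots,g_n$ consisting of those relations above with $i\ge2$; $H^{[2]}$ is the group it defines. $\mathcal P^{[2]}$ is consistent if every element of $H^{[2]}$ is represented by exactly one reduced word in $g_2,\ldots,g_n$. *)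

From mathcomp Require Import all_boot all_order all_algebra.
Set Implicit Arguments. Unset Strict Implicit. Unset Printing Implicit Defensive.
Import Order.TTheory GRing.Theory Num.Theory.

(* A letter (k, true) is g_k, a letter (k, false) is g_k^{-1}. *)
Definition letter := (nat * bool)%type.
Definition word := seq letter.

(* Data of a polycyclic presentation on g_1,...,g_n (1-based indices).
   pr i = None means r_i = infinity.  pc, pd, pf are the derived data
   c_{i,j,k}, d_{i,j,k}, f_{i,k}. *)
Record pcp := Pcp {
  pn : nat;
  pr : nat -> option nat;
  pe : nat -> nat -> int;
  pa : nat -> nat -> nat -> int;
  pb : nat -> nat -> nat -> int;
  pc : nat -> nat -> nat -> int;
  pd : nat -> nat -> nat -> int;
  pf : nat -> nat -> int }.

Definition gpow (k : nat) (x : int) : word :=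
  match x with
  | Posz m => nseq m (k, true)
  | Negz m => nseq m.+1 (k, false)
  end.

(* g^v relative to i : g_{i+1}^{v (i+1)} ... g_n^{v n} *)
Definition gvec (P : pcp) (v : nat -> int) (i : nat) : word :=
  flatten [seq gpow k (v k) | k <- iota i.+1 (pn P - i)].

Definition winv (w : word) : word := rev [seq (l.1, ~~ l.2) | l <- w].

Definition in_range (P : pcp) (k : nat) (x : int) : Prop :=
  forall rk, pr P k = Some rk -> (0 <= x)%R /\ (x < rk%:Z)%R.

Definition is_pcp (P : pcp) : Prop :=
  (forall i rk, 1 <= i <= pn P -> pr P i = Some rk -> 0 < rk) /\
  (forall i k ri, 1 <= i -> i < k <= pn P -> pr P i = Some ri ->
     in_range P k (pe P i k)) /\
  (forall i j k, 1 <= i -> i < j <= pn P -> i < k <= pn P ->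
     in_range P k (pa P i j k)) /\
  (forall i j k, 1 <= i -> i < j <= pn P -> i < k <= pn P -> pr P i = None ->
     in_range P k (pb P i j k)) /\
  (forall i j k, 1 <= i -> i < j <= pn P -> i < k <= pn P -> pr P j = None ->
     in_range P k (pc P i j k)) /\
  (forall i j k, 1 <= i -> i < j <= pn P -> i < k <= pn P ->
     pr P i = None -> pr P j = None -> in_range P k (pd P i j k)) /\
  (forall i k ri, 1 <= i -> i < k <= pn P -> pr P i = Some ri ->
     in_range P k (pf P i k)).

Definition wf (P : pcp) (s : nat) (w : word) : bool :=
  all (fun l => (s <= l.1) && (l.1 <= pn P)) w.

(* Defining relations of P^{[s]} (those with i >= s), together with the
   free cancellations g_i g_i^{-1} = 1 = g_i^{-1} g_i for s <= i <= n. *)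
Inductive defrel (P : pcp) (s : nat) : word -> word -> Prop :=
  | dr_pow i ri : s <= i <= pn P -> pr P i = Some ri ->
      defrel P s (nseq ri (i, true)) (gvec P (pe P i) i)
  | dr_a i j : s <= i -> i < j <= pn P ->
      defrel P s [:: (j, true); (i, true)] ((i, true) :: gvec P (pa P i j) i)
  | dr_b i j : s <= i -> i < j <= pn P -> pr P i = None ->
      defrel P s [:: (j, true); (i, false)] ((i, false) :: gvec P (pb P i j) i)
  | dr_cancel i b : s <= i <= pn P -> defrel P s [:: (i, b); (i, ~~ b)] [::].

Inductive cong (R : word -> word -> Prop) : word -> word -> Prop :=
  | cong_refl w : cong R w w
  | cong_sym u v : cong R u v -> cong R v u
  | cong_trans u v w : cong R u v -> cong R v w -> cong R u w
  | cong_rel u v l r : R l r -> cong R (u ++ l ++ v) (u ++ r ++ v).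

(* equality in the group H^{[s]} presented by P^{[s]} (H^{[1]} = H) *)
Definition eqH (P : pcp) (s : nat) : word -> word -> Prop := cong (defrel P s).

(* The derived data c, d, f are the ones computed from the presentation:
   g^{c_{i,j}} = (g^{a_{i,j}})^{-1}, g^{d_{i,j}} = (g^{b_{i,j}})^{-1},
   g^{f_i} = (g^{e_i})^{-1}, all holding in H^{[i+1]}; this makes the
   relations g_j^{-1} g_i = g_i g^{c_{i,j}}, g_j^{-1} g_i^{-1} = g_i^{-1} g^{d_{i,j}},
   g_i^{-1} = g_i^{r_i-1} g^{f_i} hold in H^{[i]}. *)
Definition derived_ok (P : pcp) : Prop :=
  (forall i j, 1 <= i -> i < j <= pn P -> pr P j = None ->
     eqH P i.+1 (gvec P (pa P i j) i ++ gvec P (pc P i j) i) [::]) /\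
  (forall i j, 1 <= i -> i < j <= pn P -> pr P i = None -> pr P j = None ->
     eqH P i.+1 (gvec P (pb P i j) i ++ gvec P (pd P i j) i) [::]) /\
  (forall i ri, 1 <= i <= pn P -> pr P i = Some ri ->
     eqH P i.+1 (gvec P (pe P i) i ++ gvec P (pf P i) i) [::]).

Definition reduced (P : pcp) (s : nat) (u : word) : Prop :=
  exists x : nat -> int, (forall k, s <= k <= pn P -> in_range P k (x k)) /\
    u = gvec P x s.-1.

Definition consistent (P : pcp) (s : nat) : Prop :=
  forall w, wf P s w -> exists! u, reduced P s u /\ eqH P s w u.

Definition opt {A} (b : bool) (x : A) : seq A := if b then [:: x] else [::].

(* Non-reduced subwords starting at the beginning of s:
   (smallest generator index involved, length, right-hand side). *)
Definition redexes (P : pcp) (s : word) : seq (nat * nat * word) :=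
  let n := pn P in
  match s with
  | [::] => [::]
  | (j, bj) :: t =>
    (match t with
     | (i, bi) :: _ =>
       let ok := [&& 1 <= i, i < j & j <= n] in
       (match bj, bi with
        | true, true => opt ok (i, 2, (i, true) :: gvec P (pa P i j) i)
        | true, false => opt (ok && (pr P i == None))
                           (i, 2, (i, false) :: gvec P (pb P i j) i)
        | false, true => opt (ok && (pr P j == None))
                           (i, 2, (i, true) :: gvec P (pc P i j) i)
        | false, false => opt [&& ok, pr P i == None & pr P j == None]
                           (i, 2, (i, false) :: gvec P (pd P i j) i)
        end) ++
       opt [&& i == j, bi != bj, 1 <= j & j <= n] (j, 2, [::])
     | [::] => [::]
     end) ++
    (match pr P j with
     | Some rj =>
       (if bj then
          opt [&& 1 <= j, j <= n, 0 < rj & take rj s == nseq rj (j, true)]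
              (j, rj, gvec P (pe P j) j)
        else
          opt ((1 <= j) && (j <= n))
              (j, 1, nseq rj.-1 (j, true) ++ gvec P (pf P j) j))
     | None => [::]
     end)
  end.

Definition candidates (P : pcp) (w : word) : seq (nat * (nat * nat * word)) :=
  flatten [seq [seq (p, x) | x <- redexes P (drop p w)] | p <- iota 0 (size w)].

(* priority: smallest generator index first, then leftmost; first listed on ties *)
Definition better (c1 c2 : nat * (nat * nat * word)) : bool :=
  let: (p1, (i1, _, _)) := c1 in
  let: (p2, (i2, _, _)) := c2 in
  (i1 < i2) || ((i1 == i2) && (p1 < p2)).

Definition choose_redex (P : pcp) (w : word) : option (nat * (nat * nat * word)) :=
  foldl (fun best c => match best with
                       | None => Some c
                       | Some b => if better c b then Some c else best
                       end) None (candidates P w).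

(* one collection step, None if w is reduced *)
Definition step (P : pcp) (w : word) : option word :=
  match choose_redex P w with
  | None => None
  | Some (p, (_, len, rhs)) => Some (take p w ++ rhs ++ drop (p + len) w)
  end.

Fixpoint collect_fuel (P : pcp) (k : nat) (w : word) : option word :=
  match step P w with
  | None => Some w
  | Some w' => match k with 0 => None | k'.+1 => collect_fuel P k' w' end
  end.

(* collects P w v : the collection-to-the-left algorithm terminates on w with result v,
   i.e. c(w) = v *)
Definition collects (P : pcp) (w v : word) : Prop :=
  exists k, collect_fuel P k w = Some v.

Definition same_collection (P : pcp) (w1 w2 : word) : Prop :=
  exists v, collects P w1 v /\ collects P w2 v.

(* sigma (acting on representative words) induces an endomorphism of H^{[s]} *)
Definition is_endo (P : pcp) (s : nat) (sig : word -> word) : Prop :=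
  (forall w, wf P s w -> wf P s (sig w)) /\
  (forall u v, wf P s u -> wf P s v -> eqH P s u v -> eqH P s (sig u) (sig v)) /\
  (forall u v, wf P s u -> wf P s v -> eqH P s (sig (u ++ v)) (sig u ++ sig v)).

Definition is_auto (P : pcp) (s : nat) (sig : word -> word) : Prop :=
  is_endo P s sig /\
  (forall u v, wf P s u -> wf P s v -> eqH P s (sig u) (sig v) -> eqH P s u v) /\
  (forall y, wf P s y -> exists x, wf P s x /\ eqH P s (sig x) y).

From mathcomp Require Import all_boot all_order all_algebra zify.
From Stdlib Require Import Setoid Morphisms.
Set Implicit Arguments. Unset Strict Implicit. Unset Printing Implicit Defensive.

(* Follow the collection of a word w in which g_1 occurs only positively.  Pushing
   every g_1 to the left through g_j g_1 = g_1 sigma(g_j) writes w = g_1^k u, where k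
   counts the g_1 in w and u lies in H^[2].  Every collection step preserves k and the
   value of u in H^[2], except g_1^(r_1) -> g^(e_1): by the priority rule it only fires
   on a leading block g_1^(r_1), and it turns (r_1, u) into (0, g^(e_1) u).  Hence in
   H^[2], c(g_j g_1^(r_1)) = g^(e_1) sigma^(r_1)(g_j) and c(g_j g^(e_1)) = g_j g^(e_1),
   so sigma^(r_1) is conjugation by g^(e_1) and sigma is bijective.  After its first
   step g_1^(r_1+1) -> g^(e_1) g_1, the same bookkeeping compares sigma(g^(e_1)) with
   g^(e_1) in c(g_1^(r_1+1)) = c(g_1 g^(e_1)). *)

Lemma cong_ctx R a b u v : cong R u v -> cong R (a ++ u ++ b) (a ++ v ++ b).
Proof.
elim=> [w|u' v' _ IH|u' v' w' _ IH1 _ IH2|u' v' l r Hr].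
- exact: cong_refl.
- exact: cong_sym.
- exact: cong_trans IH2.
- by have := @cong_rel R (a ++ u') (v' ++ b) l r Hr; rewrite -!catA.
Qed.

Global Instance eqH_equiv P s : Equivalence (eqH P s).
Proof. by split; [exact: cong_refl | exact: cong_sym | move=> x y z; exact: cong_trans]. Qed.

Global Instance cat_eqH_proper P s :
  Proper (eqH P s ==> eqH P s ==> eqH P s) (@cat letter).
Proof.
move=> u u' Hu v v' Hv; transitivity (u' ++ v).
  by have := cong_ctx [::] v Hu.
by have := cong_ctx u' [::] Hv; rewrite !cats0.
Qed.

Global Instance cons_eqH_proper P s : Proper (eq ==> eqH P s ==> eqH P s) (@cons letter).
Proof. by move=> l _ <- u u' Hu; have := cong_ctx [:: l] [::] Hu; rewrite !cats0. Qed.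

Lemma defrel_eqH P s l r : defrel P s l r -> eqH P s l r.
Proof. by move=> H; have := @cong_rel _ [::] [::] _ _ H; rewrite !cats0. Qed.

Lemma defrel_mono P s s' l r : s <= s' -> defrel P s' l r -> defrel P s l r.
Proof.
move=> ss' [i ri /andP[H1 H2] H3|i j H1 H2|i j H1 H2 H3|i b /andP[H1 H2]].
- by apply: dr_pow => //; rewrite (leq_trans ss' H1).
- by apply: dr_a => //; rewrite (leq_trans ss' H1).
- by apply: dr_b => //; rewrite (leq_trans ss' H1).
- by apply: dr_cancel; rewrite (leq_trans ss' H1).
Qed.

Lemma eqH_mono P s s' u v : s <= s' -> eqH P s' u v -> eqH P s u v.
Proof.
move=> ss'; elim=> [w|u' v' _ IH|u' v' w' _ IH1 _ IH2|u' v' l r Hr].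
- reflexivity.
- by symmetry.
- by transitivity v'.
- by apply: cong_rel; apply: defrel_mono Hr.
Qed.

Lemma winv_cat u v : winv (u ++ v) = winv v ++ winv u.
Proof. by rewrite /winv map_cat rev_cat. Qed.

Lemma winv_cons l w : winv (l :: w) = winv w ++ [:: (l.1, ~~ l.2)].
Proof. by rewrite /winv /= rev_cons -cats1. Qed.

Lemma winvK : involutive winv.
Proof.
move=> w; rewrite /winv map_rev revK -map_comp.
by elim: w => //= [[k b] w ->]; rewrite negbK.
Qed.

Lemma wf_cat P s u v : wf P s (u ++ v) = wf P s u && wf P s v.
Proof. exact: all_cat. Qed.

Lemma wf_winv P s w : wf P s (winv w) = wf P s w.
Proof. by rewrite /wf /winv all_rev all_map. Qed.

Lemma wf_mono P s s' w : s <= s' -> wf P s' w -> wf P s w.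
Proof. by move=> ss' /allP H; apply/allP => l /H /andP[H1 ->]; rewrite (leq_trans ss' H1). Qed.

Section Group.
Variables (P : pcp) (s : nat).

Lemma cat_winv_eqH w : wf P s w -> eqH P s (w ++ winv w) [::].
Proof.
elim: w => [|[k b] w IH] /=; first reflexivity.
case/andP=> Hk Hw; rewrite winv_cons catA (IH Hw) /=.
exact/defrel_eqH/dr_cancel.
Qed.

Lemma winv_cat_eqH w : wf P s w -> eqH P s (winv w ++ w) [::].
Proof. by move=> Hw; have := @cat_winv_eqH (winv w); rewrite winvK wf_winv; apply. Qed.

Lemma eqH_winv u v : wf P s u -> wf P s v -> eqH P s u v ->
  eqH P s (winv u) (winv v).
Proof.
move=> Hu Hv Huv.
transitivity (winv u ++ (v ++ winv v)).
  by rewrite cat_winv_eqH // cats0; reflexivity.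
transitivity (winv u ++ (u ++ winv v)).
  by apply: cat_eqH_proper; [reflexivity | apply: cat_eqH_proper; [symmetry | reflexivity]].
by rewrite catA winv_cat_eqH //; reflexivity.
Qed.

Lemma eqH_catl a u v : wf P s a -> eqH P s (a ++ u) (a ++ v) -> eqH P s u v.
Proof.
move=> Ha H; transitivity ((winv a ++ a) ++ u).
  by rewrite winv_cat_eqH //; reflexivity.
by rewrite -catA H catA winv_cat_eqH //; reflexivity.
Qed.

Lemma eqH_conj_cancel a u : wf P s a -> eqH P s (winv a ++ (a ++ u ++ winv a) ++ a) u.
Proof.
move=> Ha; rewrite !catA winv_cat_eqH // -catA winv_cat_eqH // cats0.
reflexivity.
Qed.

End Group.

(* Collection keeps words in such letters (exponents in range are nonnegative at
   finite r_k), so it never creates g_1^(-1). *)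
Definition good_letter P (l : letter) := (1 <= l.1 <= pn P) && (l.2 || (pr P l.1 == None)).

(* The exponents a, b, c, d of the relations g_j^(+-1) g_i^(+-1) = g_i^(+-1) g^(...). *)
Definition pair_exp P (bj bi : bool) :=
  match bj, bi with
  | true, true => pa P | true, false => pb P
  | false, true => pc P | false, false => pd P
  end.

Lemma gvec_wf P v i : wf P i.+1 (gvec P v i).
Proof.
apply/allP => l /flatten_mapP [k]; rewrite mem_iota => /andP[H1 H2].
case: (v k) => m; rewrite /gpow mem_nseq => /andP[_ /eqP ->] /=; apply/andP; split; lia.
Qed.

Lemma gvec_good P v i : (forall k, i < k <= pn P -> in_range P k (v k)) ->
  all (good_letter P) (gvec P v i).
Proof.
move=> Hr; apply/allP => l /flatten_mapP [k]; rewrite mem_iota => /andP[H1 H2].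
have Hk : i < k <= pn P by apply/andP; split; lia.
have := Hr k Hk; case: (v k) => m Hin; rewrite /gpow mem_nseq => /andP[_ /eqP ->].
  by rewrite /good_letter /=; apply/andP; split => //; apply/andP; split; lia.
rewrite /good_letter /=; apply/andP; split; first by apply/andP; split; lia.
by case E: (pr P k) => [rk|] //; have [] := Hin rk E.
Qed.

Lemma cancel_pair_eqH P s j b : s <= j <= pn P -> eqH P s [:: (j, b); (j, ~~ b)] [::].
Proof. by move=> Hj; apply/defrel_eqH/dr_cancel. Qed.

Lemma eqH_invl_pair P s j l A C : s <= j <= pn P ->
  eqH P s [:: (j, true); l] (l :: A) -> eqH P s (A ++ C) [::] ->
  eqH P s [:: (j, false); l] (l :: C).
Proof.
move=> Hj HA HAC.
transitivity ([:: (j, false); l] ++ A ++ C); first by rewrite HAC cats0; reflexivity.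
transitivity ([:: (j, false)] ++ [:: (j, true); l] ++ C); first by rewrite HA; reflexivity.
transitivity ([::] ++ [:: (j, false); (j, ~~ false)] ++ l :: C); first reflexivity.
by rewrite cancel_pair_eqH //; reflexivity.
Qed.

Lemma eqH_inv_pow P s j r E F : s <= j <= pn P -> 0 < r ->
  eqH P s (nseq r (j, true)) E -> eqH P s (E ++ F) [::] ->
  eqH P s [:: (j, false)] (nseq r.-1 (j, true) ++ F).
Proof.
move=> Hj Hr HE HEF.
transitivity ([:: (j, false)] ++ E ++ F); first by rewrite HEF; reflexivity.
rewrite catA -HE; case: r Hr {HE} => // r _.
transitivity ([::] ++ [:: (j, false); (j, ~~ false)] ++ nseq r (j, true) ++ F); first reflexivity.
by rewrite cancel_pair_eqH //; reflexivity.
Qed.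

Lemma redexesP P s x : x \in redexes P s ->
  (exists j bj i bi t, [/\ s = (j, bj) :: (i, bi) :: t, 1 <= i, i < j <= pn P,
      (bi || (pr P i == None)) && (bj || (pr P j == None)) &
      x = (i, 2, (i, bi) :: gvec P (pair_exp P bj bi i j) i)]) \/
  (exists j b t, [/\ s = (j, b) :: (j, ~~ b) :: t, 1 <= j <= pn P & x = (j, 2, [::])]) \/
  (exists j rj, [/\ pr P j = Some rj, 1 <= j <= pn P, 0 < rj,
      take rj s = nseq rj (j, true) & x = (j, rj, gvec P (pe P j) j)]) \/
  (exists j rj t, [/\ s = (j, false) :: t, pr P j = Some rj, 1 <= j <= pn P &
      x = (j, 1, nseq rj.-1 (j, true) ++ gvec P (pf P j) j)]).
Proof.
case: s => [|[j bj] t] //=; rewrite mem_cat => /orP[H|H].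
- case: t H => [|[i bi] t] //; rewrite mem_cat => /orP[H|H].
  + left; exists j, bj, i, bi, t.
    case: bj H; case: bi; rewrite /opt; case: ifP => // Hc; rewrite inE => /eqP -> /=.
    * by case/and3P: Hc => -> -> ->.
    * by case/andP: Hc => /and3P[-> -> ->] ->.
    * by case/andP: Hc => /and3P[-> -> ->] ->.
    * by move: Hc => /and3P[/and3P[-> -> ->] -> ->].
  + right; left; move: H; rewrite /opt; case: ifP => // /and4P[/eqP Eij Hb Hj Hjn].
    rewrite inE => /eqP ->; exists j, bj, t; split => //; last by apply/andP.
    by subst i; case: bj bi Hb {Hj Hjn} => [] [].
- right; right; case E: (pr P j) H => [rj|] //; case: bj; rewrite /opt.
  + case: ifP => // /and4P[Hj Hjn Hr Ht]; rewrite inE => /eqP ->.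
    by left; exists j, rj; split => //; [apply/andP | apply/eqP].
  + case: ifP => // /andP[Hj Hjn]; rewrite inE => /eqP ->.
    by right; exists j, rj, t; split => //; apply/andP.
Qed.

Section Relations.
Variable P : pcp.
Hypothesis Hpcp : is_pcp P.
Hypothesis Hder : derived_ok P.

Lemma pair_exp_in_range i j bj bi : 1 <= i -> i < j <= pn P ->
  bi || (pr P i == None) -> bj || (pr P j == None) ->
  forall k, i < k <= pn P -> in_range P k (pair_exp P bj bi i j k).
Proof.
have [_ [_ [Ha [Hb [Hc [Hd _]]]]]] := Hpcp.
move=> Hi Hij; case: bj; case: bi => //= Hbi Hbj k Hk.
- exact: Ha.
- by apply: Hb => //; apply/eqP.
- by apply: Hc => //; apply/eqP.
- by apply: Hd => //; apply/eqP.
Qed.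

Lemma pair_rel s i j bj bi : 1 <= s <= i -> i < j <= pn P ->
  bi || (pr P i == None) -> bj || (pr P j == None) ->
  eqH P s [:: (j, bj); (i, bi)] ((i, bi) :: gvec P (pair_exp P bj bi i j) i).
Proof.
move=> /andP[Hs Hsi] Hij Hbi Hbj; have Hsj : s <= j <= pn P by lia.
have [Hac [Hbd _]] := Hder.
case: bj Hbj; case: bi Hbi => /= Hbi Hbj.
- by apply/defrel_eqH/dr_a.
- by apply/defrel_eqH/dr_b => //; apply/eqP.
- apply: (eqH_invl_pair (A := gvec P (pa P i j) i)) => //; first exact/defrel_eqH/dr_a.
  apply: (eqH_mono (s' := i.+1)); first lia.
  by apply: Hac; [lia | done | exact/eqP].
- apply: (eqH_invl_pair (A := gvec P (pb P i j) i)) => //.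
    by apply/defrel_eqH/dr_b => //; apply/eqP.
  apply: (eqH_mono (s' := i.+1)); first lia.
  by apply: Hbd; [lia | done | exact/eqP | exact/eqP].
Qed.

Lemma inv_rel s j rj : 1 <= s <= j -> j <= pn P -> pr P j = Some rj ->
  eqH P s [:: (j, false)] (nseq rj.-1 (j, true) ++ gvec P (pf P j) j).
Proof.
move=> /andP[Hs Hsj] Hj Hrj; have Hsjn : s <= j <= pn P by lia.
apply: (eqH_inv_pow (E := gvec P (pe P j) j)) => //.
- by apply: Hpcp.1 Hrj; lia.
- exact/defrel_eqH/dr_pow.
- by apply: (eqH_mono (s' := j.+1)); [lia | apply: Hder.2.2 Hrj; lia].
Qed.

Lemma redex_rhs_good s i len rhs : all (good_letter P) s ->
  (i, len, rhs) \in redexes P s -> all (good_letter P) rhs.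
Proof.
have [_ [He [_ [_ [_ [_ Hf]]]]]] := Hpcp.
move=> Hs /redexesP[[j [bj [i' [bi [t [Es Hi Hij /andP[Hbi Hbj] [_ _ ->]]]]]]]|
  [[j [b [t [_ _ [_ _ ->]]]]]|[[j [rj [Hrj Hj _ _ [_ _ ->]]]]|[j [rj [t [_ Hrj Hj [_ _ ->]]]]]]]] //.
- move: Hs; rewrite Es /= => /and3P[_ -> _] /=.
  exact/gvec_good/pair_exp_in_range.
- by apply: gvec_good => k Hk; apply: He Hrj; lia.
- rewrite all_cat all_nseq /good_letter /= Hj orbT /=.
  by apply: gvec_good => k Hk; apply: Hf Hrj; lia.
Qed.

Lemma redex_H2 s i len rhs : all (good_letter P) s ->
  (i, len, rhs) \in redexes P s -> 1 < i ->
  [/\ wf P 2 (take len s), wf P 2 rhs & eqH P 2 rhs (take len s)].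
Proof.
have gvec_wf2 v k : 1 < k -> wf P 2 (gvec P v k) by move=> Hk; apply: wf_mono (gvec_wf P v k); lia.
move=> Hs /redexesP[[j [bj [i' [bi [t [Es Hi Hij /andP[Hbi Hbj] [-> -> ->]]]]]]]|
  [[j [b [t [Es Hj [-> -> ->]]]]]|[[j [rj [Hrj Hj _ Ht [-> -> ->]]]]|
  [j [rj [t [Es Hrj Hj [-> -> ->]]]]]]]] Hi2.
- move: (gvec_wf2 (pair_exp P bj bi i' j) i' Hi2); rewrite Es /wf /= take0 /= => ->.
  by split; [lia | lia | symmetry; apply: pair_rel => //; lia].
- rewrite Es /wf /= take0 /=.
  by split; [lia | done | symmetry; apply: cancel_pair_eqH; lia].
- move: (gvec_wf2 (pe P j) j Hi2); rewrite Ht /wf all_nseq /= => ->.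
  by split; [lia | done | symmetry; apply/defrel_eqH/dr_pow => //; lia].
- move: (gvec_wf2 (pf P j) j Hi2); rewrite Es /wf /= take0 /= all_cat all_nseq /= => ->.
  by split; [lia | lia | symmetry; apply: inv_rel => //; lia].
Qed.

End Relations.

Definition candidate := (nat * (nat * nat * word))%type.

Lemma better_irr (c : candidate) : ~~ better c c.
Proof. by case: c => p [[i l] r]; rewrite /better /= !ltnn andbF. Qed.

Lemma better_trans (a b c : candidate) : better a b -> better b c -> better a c.
Proof.
case: a => p1 [[i1 l1] r1]; case: b => p2 [[i2 l2] r2]; case: c => p3 [[i3 l3] r3].
rewrite /better /=; lia.
Qed.

Lemma mem_candidates P w p x :
  ((p, x) \in candidates P w) = (p < size w) && (x \in redexes P (drop p w)).
Proof.
apply/flatten_mapP/andP.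
- by case=> q; rewrite mem_iota add0n => Hq /mapP [y Hy [-> ->]].
- by case=> Hp Hx; exists p; [rewrite mem_iota add0n | apply/mapP; exists x].
Qed.

Definition best_of (o : option candidate) (M : seq candidate) :=
  if o is Some b then b \in M /\ forall c, c \in M -> ~~ better c b else M = [::].

Lemma foldl_best_of L : forall acc M, best_of acc M ->
  best_of (foldl (fun best c => match best with
                       | None => Some c
                       | Some b => if better c b then Some c else best
                       end) acc L) (M ++ L).
Proof.
elim: L => [|c L IH] acc M H /=; first by rewrite cats0.
rewrite -cat_rcons; apply: IH.
case: acc H => [b [Hb Hmin]|->] /=; last first.
  by split=> [|c']; rewrite inE // => /eqP ->; apply: better_irr.
case: ifP => Hcb /=; split; rewrite ?mem_rcons ?inE ?eqxx ?Hb ?orbT // => c';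
  rewrite mem_rcons inE => /orP[/eqP ->|Hc']; rewrite ?better_irr ?Hcb ?Hmin //.
by apply/negP => Hc'c; have /negP := Hmin c' Hc'; apply; apply: better_trans Hcb.
Qed.

Lemma stepP P w :
  if step P w is Some w' then exists p i len rhs,
      [/\ (p, (i, len, rhs)) \in candidates P w,
          (forall c, c \in candidates P w -> ~~ better c (p, (i, len, rhs))) &
          w' = take p w ++ rhs ++ drop (p + len) w]
  else candidates P w = [::].
Proof.
rewrite /step /choose_redex.
have := @foldl_best_of (candidates P w) None [::] erefl; rewrite cat0s.
by case: foldl => [[p [[i len] rhs]] [H1 H2]|] //=; exists p, i, len, rhs.
Qed.

Section Collection.
Variables (P : pcp) (r1 : nat).
Hypothesis Hpcp : is_pcp P.
Hypothesis Hder : derived_ok P.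
Hypothesis Hn1 : 1 <= pn P.
Hypothesis Hr1 : pr P 1 = Some r1.

Local Notation g1 := ((1, true) : letter).
Local Notation e := (gvec P (pe P 1) 1).
Local Notation good := (all (good_letter P)).

(* [conj1 w] represents g_1^(-1) w g_1, read off the relations g_j g_1 = g_1 g^(a_(1,j)). *)
Definition conj1_letter (l : letter) : word :=
  if l.2 then gvec P (pa P 1 l.1) 1 else winv (gvec P (pa P 1 l.1) 1).

Definition conj1 (w : word) : word := flatten (map conj1_letter w).

Definition count_g1 (w : word) : nat := count (pred1 g1) w.

(* w = g_1^(count_g1 w) * pull_g1 w in H: every letter is conjugated once per g_1 to its right. *)
Fixpoint pull_g1 (w : word) : word :=
  match w with
  | [::] => [::]
  | l :: r => if l == g1 then pull_g1 r else iter (count_g1 r) conj1 [:: l] ++ pull_g1 r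
  end.

(* Provided by sigma, which agrees with conj1 on H^[2]. *)
Hypothesis conj1_compat : forall u v, wf P 2 u -> wf P 2 v -> eqH P 2 u v ->
  eqH P 2 (conj1 u) (conj1 v).

Lemma r1_gt0 : 0 < r1.
Proof. exact: Hpcp.1 Hr1. Qed.

Lemma conj1_cat u v : conj1 (u ++ v) = conj1 u ++ conj1 v.
Proof. by rewrite /conj1 map_cat flatten_cat. Qed.

Lemma iter_conj1_cat n u v : iter n conj1 (u ++ v) = iter n conj1 u ++ iter n conj1 v.
Proof. by elim: n => //= n ->; rewrite conj1_cat. Qed.

Lemma iter_conj1_nil n : iter n conj1 [::] = [::].
Proof. by elim: n => //= n ->. Qed.

Lemma conj1_winv w : conj1 (winv w) = winv (conj1 w).
Proof.
elim: w => [|[k b] w IH] //; rewrite winv_cons conj1_cat IH -cat1s conj1_cat winv_cat.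
by rewrite /conj1 /= !cats0 /conj1_letter; case: b => //=; rewrite winvK.
Qed.

Lemma iter_conj1_winv n w : iter n conj1 (winv w) = winv (iter n conj1 w).
Proof. by elim: n => //= n ->; rewrite conj1_winv. Qed.

Lemma conj1_wf w : wf P 2 (conj1 w).
Proof.
elim: w => //= l w IH; rewrite wf_cat IH andbT /conj1_letter.
by case: ifP; rewrite ?wf_winv gvec_wf.
Qed.

Lemma iter_conj1_wf n w : wf P 2 w -> wf P 2 (iter n conj1 w).
Proof. by case: n => //= n _; apply: conj1_wf. Qed.

Lemma iter_conj1_eqH n u v : wf P 2 u -> wf P 2 v -> eqH P 2 u v ->
  eqH P 2 (iter n conj1 u) (iter n conj1 v).
Proof.
move=> Hu Hv Huv; elim: n => //= n IH.
by apply: conj1_compat => //; apply: iter_conj1_wf.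
Qed.

Lemma count_g1_cat u v : count_g1 (u ++ v) = count_g1 u + count_g1 v.
Proof. exact: count_cat. Qed.

Lemma count_g1_nseq m : count_g1 (nseq m g1) = m.
Proof. by rewrite /count_g1 count_nseq /= mul1n. Qed.

Lemma count_g1_wf w : wf P 2 w -> count_g1 w = 0.
Proof.
move=> Hw; apply/eqP; rewrite -leqn0 leqNgt -has_count; apply/hasPn => l /(allP Hw).
by case: l => k b /= /andP[Hk _]; apply/eqP => -[Ek _]; rewrite Ek in Hk.
Qed.

Lemma pull_g1_cat u v : pull_g1 (u ++ v) = iter (count_g1 v) conj1 (pull_g1 u) ++ pull_g1 v.
Proof.
elim: u => [|l u IH] /=; first by rewrite iter_conj1_nil.
case: ifP => _; first exact: IH.
by rewrite IH iter_conj1_cat catA count_g1_cat addnC iterD.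
Qed.

Lemma pull_g1_id w : count_g1 w = 0 -> pull_g1 w = w.
Proof.
elim: w => //= l w IH; rewrite /count_g1 /=.
by case: (eqVneq l g1) => [->|Hl] //=; rewrite add0n => Hw; rewrite Hw IH.
Qed.

Lemma pull_g1_nseq m w : pull_g1 (nseq m g1 ++ w) = pull_g1 w.
Proof. by elim: m => //= m ->. Qed.

Lemma good_letter_ge2 l : good_letter P l -> l != g1 -> 1 < l.1 <= pn P.
Proof.
case: l => k b; rewrite /good_letter /= => /andP[/andP[H1 ->] Hb] Hne; rewrite andbT.
case: (ltngtP 1 k) => // Ek; first lia.
by move: Hb Hne; rewrite -Ek Hr1 orbF => ->.
Qed.

Lemma good_letter_g1 b : good_letter P (1, b) -> b.
Proof. by rewrite /good_letter /= Hr1 orbF => /andP[]. Qed.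

Lemma pair_exp_conj1 j bj : 1 < j <= pn P -> bj || (pr P j == None) ->
  eqH P 2 (gvec P (pair_exp P bj true 1 j) 1) (conj1_letter (j, bj)).
Proof.
move=> Hj; case: bj => /= [_|/eqP Hpj]; first reflexivity.
rewrite /conj1_letter /=; transitivity
  ((winv (gvec P (pa P 1 j) 1) ++ gvec P (pa P 1 j) 1) ++ gvec P (pc P 1 j) 1).
  by rewrite winv_cat_eqH ?gvec_wf //; reflexivity.
by rewrite -catA Hder.1 ?cats0 //; reflexivity.
Qed.

Lemma pull_g1_local A seg rhs B : count_g1 seg = count_g1 rhs ->
  wf P 2 (pull_g1 seg) -> wf P 2 (pull_g1 rhs) -> eqH P 2 (pull_g1 rhs) (pull_g1 seg) ->
  count_g1 (A ++ rhs ++ B) = count_g1 (A ++ seg ++ B) /\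
  eqH P 2 (pull_g1 (A ++ rhs ++ B)) (pull_g1 (A ++ seg ++ B)).
Proof.
move=> Hc Hs Hr H; split; first by rewrite !count_g1_cat Hc.
rewrite !pull_g1_cat !count_g1_cat Hc.
by apply: cat_eqH_proper; [|apply: cat_eqH_proper; [exact: iter_conj1_eqH|]]; reflexivity.
Qed.

Lemma pull_g1_local_H2 A seg rhs B : wf P 2 seg -> wf P 2 rhs -> eqH P 2 rhs seg ->
  count_g1 (A ++ rhs ++ B) = count_g1 (A ++ seg ++ B) /\
  eqH P 2 (pull_g1 (A ++ rhs ++ B)) (pull_g1 (A ++ seg ++ B)).
Proof. by move=> Hs Hr H; apply: pull_g1_local; rewrite ?pull_g1_id ?count_g1_wf. Qed.

Lemma pull_g1_pair A j bj t : 1 < j <= pn P -> bj || (pr P j == None) ->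
  let rhs := g1 :: gvec P (pair_exp P bj true 1 j) 1 in
  count_g1 (A ++ rhs ++ t) = count_g1 (A ++ [:: (j, bj); g1] ++ t) /\
  eqH P 2 (pull_g1 (A ++ rhs ++ t)) (pull_g1 (A ++ [:: (j, bj); g1] ++ t)).
Proof.
move=> Hj Hbj; have Hne : (j, bj) != g1 by apply/eqP => -[Ej _]; rewrite Ej in Hj.
have HG := gvec_wf P (pair_exp P bj true 1 j) 1.
apply: pull_g1_local => /=; rewrite ?(negbTE Hne) ?cats0 ?pull_g1_id ?count_g1_wf //.
- exact: conj1_wf.
- by rewrite /conj1 /= cats0; apply: pair_exp_conj1.
Qed.

Lemma pair_candidate w A l B : w = A ++ l :: g1 :: B -> good_letter P l -> l != g1 ->
  (size A, (1, 2, g1 :: gvec P (pair_exp P l.2 true 1 l.1) 1)) \in candidates P w.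
Proof.
move=> -> Hl Hne; have /andP[Hj Hjn] := good_letter_ge2 Hl Hne.
rewrite mem_candidates drop_size_cat // size_cat /= addnS ltnS leq_addr /=.
move: Hl; rewrite /good_letter; case: l {Hne} Hj Hjn => j b /= Hj Hjn /andP[_ Hb].
rewrite /redexes !mem_cat /opt Hj Hjn /=.
by case: b Hb => /= [_|->] /=; rewrite inE eqxx.
Qed.

Lemma power_redex_mem B : (1, r1, e) \in redexes P (nseq r1 g1 ++ B).
Proof.
have Ht : take r1 (nseq r1 g1 ++ B) = nseq r1 g1 by rewrite take_size_cat ?size_nseq.
have [r Er] : exists r, r1 = r.+1 by case: (r1) r1_gt0 => // r; exists r.
have Es : nseq r1 g1 ++ B = g1 :: (nseq r g1 ++ B) by rewrite Er.
rewrite Es /redexes mem_cat Hr1 /opt -Es Ht eqxx Hn1 r1_gt0 /=.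
by rewrite inE eqxx orbT.
Qed.

Lemma redex_g1 s i len rhs : good s -> (i, len, rhs) \in redexes P s -> i < 2 ->
  (exists j bj t, [/\ s = (j, bj) :: g1 :: t, 1 < j <= pn P, bj || (pr P j == None),
     len = 2 & rhs = g1 :: gvec P (pair_exp P bj true 1 j) 1]) \/
  [/\ i = 1, len = r1, take r1 s = nseq r1 g1 & rhs = e].
Proof.
move=> Hs /redexesP[[j [bj [i' [bi [t [Es Hi Hij /andP[Hbi Hbj] [-> -> ->]]]]]]]|
  [[j [b [t [Es Hj [-> _ _]]]]]|[[j [rj [Hrj Hj _ Ht [-> -> ->]]]]|
  [j [rj [t [Es Hrj Hj [-> _ _]]]]]]]] Hi2.
- have Ei : i' = 1 by lia.
  move: Hs; rewrite Es Ei /= => /and3P[_ /good_letter_g1 Ebi _]; rewrite Ebi.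
  by left; exists j, bj, t; split => //; lia.
- have Ej : j = 1 by lia.
  move: Hs; rewrite Es Ej /= => /and3P[/good_letter_g1 Hb /good_letter_g1].
  by rewrite Hb.
- have Ej : j = 1 by lia.
  by move: Hrj Ht; rewrite Ej Hr1 => -[->] Ht; right.
- have Ej : j = 1 by lia.
  by move: Hs; rewrite Es Ej /= => /andP[/good_letter_g1].
Qed.

(* The priority rule: a letter in front of the block g_1^(r_1) would form a pair
   redex of index 1 further left. *)
Lemma power_redex_first w A s : w = A ++ s -> take r1 s = nseq r1 g1 -> good w ->
  count_g1 w <= r1 -> (forall c, c \in candidates P w -> ~~ better c (size A, (1, r1, e))) ->
  A = [::].
Proof.
move=> Ew Ht Hg Hc Hmin.
have [r Er] : exists r, r1 = r.+1 by case: (r1) r1_gt0 => // r; exists r.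
have Es : s = g1 :: (nseq r g1 ++ drop r1 s).
  by rewrite -[s](cat_take_drop r1) Ht {1}Er drop_size_cat ?size_nseq.
have HcA : count_g1 A = 0.
  by move: Hc; rewrite Ew Es count_g1_cat /= /count_g1 /= count_cat count_nseq /=; lia.
case/lastP: A Ew HcA Hmin => [//|A l] Ew; rewrite -cats1 count_g1_cat => HcA Hmin.
have Hl : l != g1 by apply/eqP => El; move: HcA; rewrite El /count_g1 /=; lia.
have Hgl : good_letter P l by move: Hg; rewrite Ew all_cat all_rcons => /andP[/andP[]].
have Ew' : w = A ++ l :: g1 :: (nseq r g1 ++ drop r1 s) by rewrite Ew -Es cat_rcons.
have := Hmin _ (pair_candidate Ew' Hgl Hl).
by rewrite /better /= size_cat addn1 ltnSn.
Qed.

Lemma pull_g1_power B : count_g1 B = 0 ->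
  count_g1 (e ++ B) = 0 /\ pull_g1 (e ++ B) = e ++ pull_g1 (nseq r1 g1 ++ B).
Proof.
have Hce : count_g1 e = 0 by apply/count_g1_wf/gvec_wf.
by move=> HcB; rewrite count_g1_cat Hce HcB pull_g1_nseq !pull_g1_id // count_g1_cat Hce HcB.
Qed.

Lemma step_invariant w w' : good w -> count_g1 w <= r1 -> step P w = Some w' ->
  good w' /\ ((count_g1 w' = count_g1 w /\ eqH P 2 (pull_g1 w') (pull_g1 w)) \/
   [/\ count_g1 w = r1, count_g1 w' = 0 & pull_g1 w' = e ++ pull_g1 w]).
Proof.
move=> Hg Hc Hstep; have := stepP P w; rewrite Hstep => -[p [i [len [rhs [Hmem Hmin ->]]]]].
move: Hmem; rewrite mem_candidates addnC -drop_drop => /andP[Hp Hx].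
have HsA : size (take p w) = p by rewrite size_takel // ltnW.
have Ew : w = take p w ++ drop p w by rewrite cat_take_drop.
move: (take p w) (drop p w) Ew HsA Hx => A s Ew HsA Hx; subst p.
rewrite {}Ew in Hg Hc Hmin *.
have /andP[HgA Hgs] : good A && good s by rewrite -all_cat.
have Es : s = take len s ++ drop len s by rewrite cat_take_drop.
split.
  rewrite !all_cat HgA (redex_rhs_good Hpcp Hgs Hx) /=.
  by move: Hgs; rewrite {1}Es all_cat => /andP[].
case: (ltnP 1 i) => Hi.
  have [Hs Hr Hrs] := redex_H2 Hpcp Hder Hgs Hx Hi.
  by left; have := pull_g1_local_H2 A (drop len s) Hs Hr Hrs; rewrite -Es.
case: (redex_g1 Hgs Hx Hi) => [[j [bj [t [Est Hj Hbj Elen Erhs]]]]|[Ei Elen Ht Erhs]].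
  by left; rewrite Est Elen Erhs /= drop0; apply: pull_g1_pair.
subst i len rhs; have EA := power_redex_first (A := A) (s := s) erefl Ht Hg Hc Hmin.
subst A; move: Hc; rewrite /=.
set B := drop r1 s; have -> : s = nseq r1 g1 ++ B by rewrite Es Ht.
rewrite count_g1_cat count_g1_nseq => Hc.
have HcB : count_g1 B = 0 by lia.
have [Hc0 ->] := pull_g1_power HcB.
by right; rewrite Hc0 HcB addn0.
Qed.

Lemma g1_prefixP w : (exists A l B, w = A ++ l :: g1 :: B /\ l != g1) \/
  w = nseq (count_g1 w) g1 ++ pull_g1 w.
Proof.
elim: w => [|x w [[A [l [B [-> Hl]]]]|Ew]]; first by right.
  by left; exists (x :: A), l, B.
case: (eqVneq x g1) => [->|Hx]; first by right; rewrite {1}Ew.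
case Ec: (count_g1 w) Ew => [|c] Ew.
  by right; rewrite /= (negbTE Hx) Ec /= {1}Ew.
by left; exists [::], x, (nseq c g1 ++ pull_g1 w); rewrite {1}Ew.
Qed.

Lemma collect_done w : good w -> count_g1 w <= r1 -> step P w = None ->
  count_g1 w < r1 /\ w = nseq (count_g1 w) g1 ++ pull_g1 w.
Proof.
move=> Hg Hc Hstep; have := stepP P w; rewrite Hstep => Hnil.
case: (g1_prefixP w) => [[A [l [B [Ew Hl]]]]|Ew].
  have Hgl : good_letter P l by move: Hg; rewrite Ew all_cat /= => /and3P[].
  by have := pair_candidate Ew Hgl Hl; rewrite Hnil.
split=> //; rewrite ltn_neqAle Hc andbT; apply/eqP => Ecw.
have : (0, (1, r1, e)) \in candidates P w.
  rewrite mem_candidates drop0 Ew Ecw power_redex_mem size_cat size_nseq andbT.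
  exact: ltn_addr r1_gt0.
by rewrite Hnil.
Qed.

Lemma collect_fuelE k w : collect_fuel P k w =
  if step P w is Some w' then (if k is k'.+1 then collect_fuel P k' w' else None) else Some w.
Proof. by case: k. Qed.

Lemma collect_fuel_pull_g1 k w v : good w -> count_g1 w <= r1 -> collect_fuel P k w = Some v ->
  (count_g1 w = r1 -> eqH P 2 v (e ++ pull_g1 w)) /\
  (count_g1 w < r1 -> exists2 v', v = nseq (count_g1 w) g1 ++ v' & eqH P 2 v' (pull_g1 w)).
Proof.
elim: k w => [|k IH] w Hg Hc; rewrite collect_fuelE; case Hs: (step P w) => [w'|] //.
1,3: case=> <-; have [Hlt Ew] := collect_done Hg Hc Hs; split=> [Ecw|_];
  [by rewrite Ecw ltnn in Hlt | by exists (pull_g1 w) => //; reflexivity].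
move=> Hf; have [Hg' [[Hcnt HV]|[Hcr Hc0 HV]]] := step_invariant Hg Hc Hs.
  have [|IH1 IH2] := IH _ Hg' _ Hf; first by rewrite Hcnt.
  rewrite -Hcnt; split=> [Ecw|Hlt]; first by rewrite -HV; apply: IH1.
  by have [v' Ev Hv'] := IH2 Hlt; exists v' => //; rewrite Hv' HV; reflexivity.
have [|_ IH2] := IH _ Hg' _ Hf; first by rewrite Hc0.
have [|v' Ev Hv'] := IH2; first by rewrite Hc0 r1_gt0.
split=> [_|]; last by rewrite Hcr ltnn.
by rewrite Ev Hc0 /= Hv' HV; reflexivity.
Qed.

Lemma collects_full w v : good w -> count_g1 w = r1 -> collects P w v ->
  eqH P 2 v (e ++ pull_g1 w).
Proof. by move=> Hg Hc [k Hk]; apply: (collect_fuel_pull_g1 Hg _ Hk).1; rewrite Hc. Qed.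

Lemma collects_partial w v : good w -> count_g1 w < r1 -> collects P w v ->
  exists2 v', v = nseq (count_g1 w) g1 ++ v' & eqH P 2 v' (pull_g1 w).
Proof. by move=> Hg Hc [k Hk]; apply: (collect_fuel_pull_g1 Hg (ltnW Hc) Hk).2. Qed.

Lemma collects_step w w' v : step P w = Some w' -> collects P w v -> collects P w' v.
Proof. by move=> Hs [[|k] Hk]; move: Hk; rewrite collect_fuelE Hs // => Hk; exists k. Qed.

Lemma step_g1_power : step P (nseq r1.+1 g1) = Some (e ++ [:: g1]).
Proof.
rewrite -(addn1 r1) nseqD; set w := nseq r1 g1 ++ _.
have Hpow : (0, (1, r1, e)) \in candidates P w.
  by rewrite mem_candidates drop0 size_cat size_nseq addn1 ltn0Sn power_redex_mem.
have := stepP P w; case: step => [w'|]; last by move=> Hnil; rewrite Hnil in Hpow.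
move=> [p [i [len [rhs [Hmem Hmin ->]]]]].
have := Hmin _ Hpow; rewrite /better /= negb_or -leqNgt => /andP[Hi Hp].
move: Hmem; rewrite mem_candidates => /andP[_ Hx].
have Hg : good (drop p w).
  by rewrite /w -nseqD drop_nseq all_nseq /good_letter /= Hn1 orbT.
have [[j [bj [t [Es Hj _ _ _]]]]|[Ei -> _ ->]] := redex_g1 Hg Hx Hi.
  by move: Es Hj; rewrite /w -nseqD drop_nseq; case: (_ - p) => [|[|m]] //= [<-].
have -> : p = 0 by move: Hp; rewrite Ei eqxx /=; lia.
by rewrite take0 add0n drop_size_cat ?size_nseq.
Qed.

Lemma e_good : good e.
Proof. by apply: gvec_good => k Hk; apply: Hpcp.2.1 Hr1; lia. Qed.

Lemma collect_conj_gen j : 1 < j <= pn P ->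
  same_collection P ((j, true) :: nseq r1 g1) ((j, true) :: e) ->
  eqH P 2 (e ++ iter r1 conj1 [:: (j, true)]) ((j, true) :: e).
Proof.
move=> Hj [v [H1 H2]].
have Hne : (j, true) != g1 by apply/eqP => -[Ej]; rewrite Ej in Hj.
have Hgj : good_letter P (j, true) by rewrite /good_letter /=; lia.
have Hwf : wf P 2 ((j, true) :: e) by rewrite -cat1s wf_cat gvec_wf /wf /=; lia.
have Hc2 := count_g1_wf Hwf.
have [v' Ev Hv'] : exists2 v', v = nseq 0 g1 ++ v' & eqH P 2 v' (pull_g1 ((j, true) :: e)).
  by rewrite -{1}Hc2; apply: collects_partial H2; [rewrite /= Hgj e_good | rewrite Hc2 r1_gt0].
rewrite /= in Ev; subst v; rewrite -(pull_g1_id Hc2) -Hv'; symmetry.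
have -> : iter r1 conj1 [:: (j, true)] = pull_g1 ((j, true) :: nseq r1 g1).
  by rewrite /= (negbTE Hne) count_g1_nseq -[nseq r1 g1]cats0 pull_g1_nseq cats0.
apply: (collects_full _ _ H1) => /=.
- by rewrite Hgj all_nseq /good_letter /= Hn1 orbT.
- by rewrite /count_g1 /= (negbTE Hne) -/(count_g1 _) count_g1_nseq.
Qed.

Lemma collect_conj_e : same_collection P (nseq r1.+1 g1) (g1 :: e) -> eqH P 2 (conj1 e) e.
Proof.
move=> [v [/(collects_step step_g1_power) H1 H2]].
have Hce : count_g1 e = 0 := count_g1_wf (gvec_wf _ _ _).
have Hg1 : good_letter P g1 by rewrite /good_letter /= Hn1.
have Hgw1 : good (e ++ [:: g1]) by rewrite all_cat e_good /= Hg1.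
have Hgw2 : good (g1 :: e) by rewrite /= Hg1 e_good.
have Hc1 : count_g1 (e ++ [:: g1]) = 1 by rewrite count_g1_cat Hce.
have Hc2 : count_g1 (g1 :: e) = 1 by rewrite /count_g1 /= -/(count_g1 e) Hce.
have HV1 : pull_g1 (e ++ [:: g1]) = conj1 e by rewrite pull_g1_cat pull_g1_id // cats0.
have HV2 : pull_g1 (g1 :: e) = e by rewrite /= pull_g1_id.
case: (ltngtP r1 1) => [|Hr|Er]; first by rewrite ltnNge r1_gt0.
  have [|v1 Ev1 Hv1] := collects_partial Hgw1 _ H1; first by rewrite Hc1.
  have [|v2 Ev2 Hv2] := collects_partial Hgw2 _ H2; first by rewrite Hc2.
  move: Ev2; rewrite Ev1 Hc1 Hc2 => -[Ev]; rewrite HV1 in Hv1; rewrite HV2 in Hv2.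
  by rewrite -Hv1 Ev Hv2; reflexivity.
have := collects_full Hgw1 _ H1; have := collects_full Hgw2 _ H2.
rewrite Hc1 Hc2 HV1 HV2 Er => /(_ erefl) Hv2 /(_ erefl) Hv1.
by apply: (eqH_catl (gvec_wf P (pe P 1) 1)); rewrite -Hv1 Hv2; reflexivity.
Qed.
End Collection.

Lemma eqH_conj_of_gens P s (f : word -> word) a : wf P s a ->
  {morph f : u v / u ++ v} -> {morph f : w / winv w} ->
  (forall w, wf P s w -> wf P s (f w)) ->
  (forall k, s <= k <= pn P -> eqH P s (f [:: (k, true)]) (winv a ++ [:: (k, true)] ++ a)) ->
  forall x, wf P s x -> eqH P s (f x) (winv a ++ x ++ a).
Proof.
move=> Ha fcat finv fwf fgen.
have f0 : f [::] = [::].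
  apply/nilP; have := congr1 size (fcat [::] [::]); rewrite /= size_cat.
  by move/eqP; rewrite -{1}(addn0 (size _)) eqn_add2l eq_sym.
have fletter k b : s <= k <= pn P -> eqH P s (f [:: (k, b)]) (winv a ++ [:: (k, b)] ++ a).
  move=> Hk; have Hwk : wf P s [:: (k, true)] by rewrite /wf /= Hk.
  case: b; first exact: fgen.
  rewrite -[[:: (k, false)]]/(winv [:: (k, true)]) finv.
  rewrite (eqH_winv (fwf _ Hwk) _ (fgen k Hk)); last by rewrite !wf_cat wf_winv Ha Hwk.
  by rewrite !winv_cat winvK -catA; reflexivity.
elim=> [|[k b] x IH] /=; first by rewrite f0 winv_cat_eqH //; reflexivity.
case/andP=> Hk Hx; rewrite -cat1s fcat (fletter _ _ Hk) (IH Hx).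
rewrite -!catA (catA a) cat_winv_eqH //; reflexivity.
Qed.

Section Endomorphism.
Variables (P : pcp) (s : nat) (sig : word -> word).
Hypothesis Hendo : is_endo P s sig.

Lemma endo_nil : eqH P s (sig [::]) [::].
Proof.
have [Hwf [_ Hcat]] := Hendo; have Hs0 := Hwf [::] erefl.
have := Hcat [::] [::] erefl erefl; rewrite cat0s => H.
transitivity ((winv (sig [::]) ++ sig [::]) ++ sig [::]).
  by rewrite winv_cat_eqH //; reflexivity.
by rewrite -catA -H winv_cat_eqH //; reflexivity.
Qed.

Lemma endo_winv w : wf P s w -> eqH P s (sig (winv w)) (winv (sig w)).
Proof.
have [Hwf [Heq Hcat]] := Hendo; move=> Hw; have Hiw : wf P s (winv w) by rewrite wf_winv.
transitivity (sig (winv w) ++ (sig w ++ winv (sig w))).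
  by rewrite cat_winv_eqH ?Hwf // cats0; reflexivity.
rewrite catA -Hcat // (Heq _ [::]) ?wf_cat ?Hiw ?Hw ?winv_cat_eqH //; last reflexivity.
exact: (cat_eqH_proper endo_nil (reflexivity _)).
Qed.

Lemma endo_iter_wf n w : wf P s w -> wf P s (iter n sig w).
Proof. by move=> Hw; elim: n => //= n; apply: Hendo.1. Qed.

Lemma endo_iter_eqH n u v : wf P s u -> wf P s v -> eqH P s u v ->
  eqH P s (iter n sig u) (iter n sig v).
Proof. by move=> Hu Hv; elim: n => //= n IH /IH; apply: Hendo.2.1; apply: endo_iter_wf. Qed.

Lemma endo_auto_of_inner_iter r a : 0 < r -> wf P s a ->
  (forall x, wf P s x -> eqH P s (iter r sig x) (winv a ++ x ++ a)) -> is_auto P s sig.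
Proof.
move=> Hr Ha Hinner; have Hwf := Hendo.1.
have Hia : wf P s (winv a) by rewrite wf_winv.
split=> //; split=> [u v Hu Hv Huv | y Hy].
  have := endo_iter_eqH r.-1 (Hwf _ Hu) (Hwf _ Hv) Huv; rewrite -!iterSr prednK // !Hinner //.
  move=> Hc; rewrite -(eqH_conj_cancel u Hia) -(eqH_conj_cancel v Hia) winvK Hc.
  reflexivity.
have Hz : wf P s (a ++ y ++ winv a) by rewrite !wf_cat Ha Hy Hia.
exists (iter r.-1 sig (a ++ y ++ winv a)); split; first exact: endo_iter_wf.
by rewrite -iterS prednK // Hinner // eqH_conj_cancel //; reflexivity.
Qed.

End Endomorphism.

Section SigmaConj1.
Variables (P : pcp) (r1 : nat) (sig : word -> word).
Hypothesis Hpcp : is_pcp P.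
Hypothesis Hder : derived_ok P.
Hypothesis Hn1 : 1 <= pn P.
Hypothesis Hr1 : pr P 1 = Some r1.
Hypothesis Hendo : is_endo P 2 sig.
Hypothesis Hsig : forall j, 2 <= j <= pn P ->
  eqH P 2 (sig [:: (j, true)]) (gvec P (pa P 1 j) 1).

Local Notation e := (gvec P (pe P 1) 1).

Lemma sig_conj1 w : wf P 2 w -> eqH P 2 (sig w) (conj1 P w).
Proof.
have [Hwf [Heq Hcat]] := Hendo.
elim: w => [_|[k b] w IH /andP[/= Hk Hw]]; first exact: endo_nil.
have Hl b' : wf P 2 [:: (k, b')] by rewrite /wf /= Hk.
rewrite -cat1s (Hcat [:: (k, b)]) ?IH ?conj1_cat //.
apply: cat_eqH_proper; last reflexivity.
rewrite /conj1 /= cats0 /conj1_letter /=; case: b; first exact: Hsig.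
rewrite -[[:: (k, false)]]/(winv [:: (k, true)]) endo_winv //.
by apply: eqH_winv; [exact: Hwf | exact: gvec_wf | exact: Hsig].
Qed.

Lemma conj1_eqH u v : wf P 2 u -> wf P 2 v -> eqH P 2 u v ->
  eqH P 2 (conj1 P u) (conj1 P v).
Proof. by move=> Hu Hv Huv; rewrite -!sig_conj1 //; apply: Hendo.2.1. Qed.

Lemma iter_sig_conj1 n x : wf P 2 x -> eqH P 2 (iter n sig x) (iter n (conj1 P) x).
Proof.
move=> Hx; elim: n => [|n IH] /=; first reflexivity.
rewrite sig_conj1; last exact: endo_iter_wf.
by apply: conj1_eqH; [exact: endo_iter_wf | exact: iter_conj1_wf | exact: IH].
Qed.

Lemma iter_sig_inner :
  (forall j, 1 < j <= pn P ->
     same_collection P ((j, true) :: nseq r1 (1, true)) ((j, true) :: e)) ->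
  forall x, wf P 2 x -> eqH P 2 (iter r1 sig x) (winv e ++ x ++ e).
Proof.
move=> Hcoll x Hx; rewrite iter_sig_conj1 //.
apply: (eqH_conj_of_gens (gvec_wf P (pe P 1) 1) (iter_conj1_cat P r1) (iter_conj1_winv P r1)) Hx.
  by move=> w; apply: iter_conj1_wf.
move=> k Hk; apply: (eqH_catl (gvec_wf P (pe P 1) 1)).
rewrite (collect_conj_gen Hpcp Hder Hn1 Hr1 conj1_eqH Hk (Hcoll k Hk)).
by rewrite catA (cat_winv_eqH (gvec_wf _ _ _)); reflexivity.
Qed.

End SigmaConj1.

Theorem lemma11 (P : pcp) (r1 : nat) (sig : word -> word) :
  is_pcp P -> derived_ok P -> 1 <= pn P ->
  pr P 1 = Some r1 ->
  consistent P 2 ->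
  is_endo P 2 sig ->
  (forall j, 2 <= j <= pn P -> eqH P 2 (sig [:: (j, true)]) (gvec P (pa P 1 j) 1)) ->
  ((forall j, 1 < j <= pn P ->
      same_collection P ((j, true) :: nseq r1 (1, true)) ((j, true) :: gvec P (pe P 1) 1)) ->
   (forall x, wf P 2 x ->
      eqH P 2 (iter r1 sig x) (winv (gvec P (pe P 1) 1) ++ x ++ gvec P (pe P 1) 1)) /\
   is_auto P 2 sig) /\
  ((forall j, 1 < j <= pn P ->
      same_collection P ((j, true) :: nseq r1 (1, true)) ((j, true) :: gvec P (pe P 1) 1)) ->
   same_collection P (nseq r1.+1 (1, true)) ((1, true) :: gvec P (pe P 1) 1) ->
   eqH P 2 (sig (gvec P (pe P 1) 1)) (gvec P (pe P 1) 1)).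
Proof.
move=> Hpcp Hder Hn1 Hr1 _ Hendo Hsig.
have Hconj1 := conj1_eqH Hendo Hsig.
split=> [Hcoll | _ Hpow].
  have Hinner := iter_sig_inner Hpcp Hder Hn1 Hr1 Hendo Hsig Hcoll.
  split; first exact: Hinner.
  exact: (endo_auto_of_inner_iter Hendo (r1_gt0 Hpcp Hn1 Hr1) (gvec_wf _ _ _) Hinner).
rewrite sig_conj1 //; last exact: gvec_wf.
exact: collect_conj_e Hpcp Hder Hn1 Hr1 Hconj1 Hpow.
Qed.
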